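(* Let $n$ be even and let $\mathrm{TH}_{n/2}:\{0,1\}^n\rightarrow\{0,1\}$ be defined by $\mathrm{TH}_{n/2}(x)=1$ iff $|x|>n/2$. Then $WUC(\mathrm{TH}_{n/2})=O(\log n)$ while $\overline{s}(\mathrm{TH}_{n/2})=\Omega(\sqrt{n})$.
   Context: $|x|$ is the Hamming weight. A classical randomized query algorithm adaptively queries input bits $x_i$ (each query costs one) and outputs a bit; for an algorithm whose minimum over inputs of the probability of outputting $f(x)$ is $p>1/2$, its bias is $\beta=p-1/2$ and its weakly unbounded cost is (number of queries) $+\log(1/(2\beta))$; $WUC(f)$ is the minimum weakly unbounded cost over classical randomized algorithms. The sensitivity of $f$ at $x$ is $s_x(f)=\sum_{i\in[n]}|f(x)-f(x\oplus e_i)|$, where $e_i$ has a 1 exactly in position $i$, and the average sensitivity is $\overline{s}(f)=2^{-n}\sum_{x\in\{0,1\}^n}s_x(f)$. $\log$ is base 2. *)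

From HB Require Import structures.
From mathcomp Require Import all_boot all_order all_algebra.
From mathcomp Require Import all_classical all_reals all_analysis.
Set Implicit Arguments. Unset Strict Implicit. Unset Printing Implicit Defensive.
Import Order.TTheory GRing.Theory Num.Theory.
Local Open Scope ring_scope.

Definition cube (n : nat) := {ffun 'I_n -> bool}.

Definition hw n (x : cube n) : nat := #|[set i | x i]|.

Definition flip n (x : cube n) (i : 'I_n) : cube n :=
  [ffun j => if j == i then ~~ x j else x j].

(* TH_{n/2}(x) = 1 iff |x| > n/2   (written 2|x| > n) *)
Definition TH n (x : cube n) : bool := (n < 2 * hw x)%N.

Definition sens n (f : cube n -> bool) (x : cube n) : nat :=
  #|[set i | f x != f (flip x i)]|.

Definition avg_sens (R : realType) n (f : cube n -> bool) : R :=
  (2 ^+ n)^-1 * \sum_(x : cube n) (sens f x)%:R.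

(* deterministic query algorithms = decision trees *)
Inductive dtree (n : nat) : Type :=
| Leaf of bool
| Node of 'I_n & dtree n & dtree n.

Fixpoint eval_dt n (t : dtree n) (x : cube n) : bool :=
  match t with
  | Leaf b => b
  | Node i t0 t1 => if x i then eval_dt t1 x else eval_dt t0 x
  end.

Fixpoint depth n (t : dtree n) : nat :=
  match t with
  | Leaf _ => 0
  | Node _ t0 t1 => (maxn (depth t0) (depth t1)).+1
  end.

(* a classical randomized query algorithm: a probability distribution
   (finite list of (weight, decision tree)) over deterministic ones *)
Definition ralg (R : realType) n := seq (R * dtree n).

Definition valid_ralg (R : realType) n (A : ralg R n) : Prop :=
  all (fun p => 0 <= p.1) A /\ \sum_(p <- A) p.1 = 1.

Definition nqueries (R : realType) n (A : ralg R n) : nat :=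
  \max_(p <- A) depth p.2.

Definition succ_prob (R : realType) n (A : ralg R n) (f : cube n -> bool)
  (x : cube n) : R :=
  \sum_(p <- A | eval_dt p.2 x == f x) p.1.

Definition min_succ (R : realType) n (A : ralg R n) (f : cube n -> bool) : R :=
  \big[Order.min/1]_(x : cube n) succ_prob A f x.

Definition bias (R : realType) n (A : ralg R n) (f : cube n -> bool) : R :=
  min_succ A f - 2^-1.

Definition log2 (R : realType) (x : R) : R := ln x / ln 2.

(* weakly unbounded cost (meaningful when bias > 0) *)
Definition wucost (R : realType) n (A : ralg R n) (f : cube n -> bool) : R :=
  (nqueries A)%:R + log2 ((2 * bias A f)^-1).

(* A computes f with positive bias and weakly unbounded cost at most c;
   WUC(f) <= c  iff such an A exists (WUC is a minimum) *)
Definition wuc_le (R : realType) n (f : cube n -> bool) (c : R) : Prop :=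
  exists A : ralg R n, valid_ralg A /\ 0 < bias A f /\ wucost A f <= c.

(* Upper bound: answer 0 with probability 1/(n+1) and otherwise return a
   uniformly random input bit.  An input with TH = 1 has at least n/2 + 1 ones
   and one with TH = 0 has at least n/2 zeros, so with the extra weight on the
   answer 0 every input is answered correctly with probability at least
   (n+2)/(2(n+1)): one query and bias 1/(2(n+1)), hence cost 1 + log2 (n+1).
   Lower bound: at each of the C(n, n/2) balanced inputs, flipping any of the
   n/2 zero bits turns TH on, so the average sensitivity is at least
   m C(2m, m) / 4^m with n = 2m, and 16^m <= 4 m C(2m, m)^2 makes this at
   least sqrt m / 2. *)

From mathcomp Require Import all_boot all_order all_algebra.
From mathcomp Require Import all_classical all_reals all_analysis.
From mathcomp Require Import zify ring lra.
Import Order.TTheory GRing.Theory Num.Theory.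
Set Implicit Arguments.
Unset Strict Implicit.
Unset Printing Implicit Defensive.
Local Open Scope ring_scope.

Section Log2.
Variable R : realType.

Lemma log2_2 : log2 (2 : R) = 1.
Proof. by rewrite /log2 divff // gt_eqF // ln_gt0 // ltr1n. Qed.

Lemma log2M (x y : R) : 0 < x -> 0 < y -> log2 (x * y) = log2 x + log2 y.
Proof. by move=> x0 y0; rewrite /log2 lnM ?posrE // mulrDl. Qed.

Lemma ler_log2 (x y : R) : 0 < x -> x <= y -> log2 x <= log2 y.
Proof.
move=> x0 xy; rewrite /log2 ler_pM2r ?invr_gt0 ?ln_gt0 ?ltr1n //.
by rewrite ler_ln ?posrE // (lt_le_trans x0 xy).
Qed.

Lemma log2_natS_le n : (0 < n)%N -> log2 (n.+1%:R : R) <= 1 + log2 n%:R.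
Proof.
move=> n0; have -> : 1 + log2 n%:R = log2 (2 * n%:R : R).
  by rewrite log2M ?log2_2 ?ltr0n.
apply: ler_log2; first by rewrite ltr0n.
by rewrite -natrM ler_nat; lia.
Qed.

Lemma log2_ge1 (x : R) : 2 <= x -> 1 <= log2 x.
Proof. by move=> x2; rewrite -log2_2 ler_log2. Qed.

End Log2.

Lemma card_bits_eq n (x : cube n) (b : bool) :
  #|[pred i | x i == b]| = if b then hw x else (n - hw x)%N.
Proof.
have eq_hw : #|[pred i | x i]| = hw x.
  by rewrite /hw; apply: eq_card => i; rewrite inE.
case: b.
  by rewrite -eq_hw; apply: eq_card => i; rewrite !inE; case: (x i).
rewrite -eq_hw -[n in (n - _)%N]card_ord -(cardC [pred i | x i]) addKn.
by apply: eq_card => i; rewrite !inE; case: (x i).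
Qed.

Lemma TH_agreeing_bits n (x : cube n) : ~~ odd n ->
  (n.+2 <= 2 * (~~ TH x + #|[pred i | x i == TH x]|))%N.
Proof.
move=> ev; rewrite card_bits_eq /TH.
have hw_le : (hw x <= n)%N by rewrite -[n in (_ <= n)%N]card_ord max_card.
have := even_halfK ev; case: (ltnP n (2 * hw x)) => /=; set m := n./2; lia.
Qed.

Section RandomBit.
Variable R : realType.

Definition random_bit_alg n : ralg R n :=
  ((n.+1%:R)^-1, Leaf n false) ::
  [seq ((n.+1%:R)^-1, Node i (Leaf n false) (Leaf n true)) | i <- enum 'I_n].

Lemma valid_random_bit_alg n : valid_ralg (random_bit_alg n).
Proof.
split.
  rewrite /= invr_ge0 ler0n all_map; apply/allP => i _ /=.
  by rewrite invr_ge0 ler0n.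
rewrite big_cons big_map /= big_enum /= sumr_const card_ord.
by rewrite addrC -mulrSr -[X in X = 1]mulr_natr mulVf // pnatr_eq0.
Qed.

Lemma nqueries_random_bit_alg n : (nqueries (random_bit_alg n) <= 1)%N.
Proof.
rewrite /nqueries big_cons big_map /= geq_max /=.
by apply: (big_ind (fun k => k <= 1)%N) => // a b; rewrite geq_max => -> ->.
Qed.

Lemma succ_prob_random_bit_alg n (x : cube n) :
  succ_prob (random_bit_alg n) (@TH n) x =
  (~~ TH x + #|[pred i | x i == TH x]|)%:R / n.+1%:R.
Proof.
rewrite /succ_prob big_cons big_map /= big_enum_cond /=.
rewrite (eq_bigl [pred i | x i == TH x]) => [|i /=]; last by case: (x i).
rewrite sumr_const [RHS]mulrC mulr_natr mulrnDr; move: #|_| => c.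
by case: (TH x); rewrite /= ?mulr0n ?add0r ?mulr1n.
Qed.

Lemma min_succ_ge n (A : ralg R n) (f : cube n -> bool) (t : R) :
  t <= 1 -> (forall x, t <= succ_prob A f x) -> t <= min_succ A f.
Proof.
move=> t1 ht; apply: (big_ind (fun y => t <= y)) => // a b ha hb.
by rewrite le_min ha hb.
Qed.

Lemma bias_random_bit_alg n : ~~ odd n ->
  (2 * n.+1%:R)^-1 <= bias (random_bit_alg n) (@TH n).
Proof.
move=> ev; have n1_gt0 : (0 : R) < n.+1%:R by rewrite ltr0n.
have -> : (2 * n.+1%:R)^-1 = n.+2%:R / (2 * n.+1%:R) - 2^-1 :> R.
  by field; rewrite addrC natr1 pnatr_eq0.
rewrite /bias lerD2r; apply: min_succ_ge => [|x].
  by rewrite ler_pdivrMr ?mulr_gt0 // mul1r -natrM ler_nat; lia.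
rewrite succ_prob_random_bit_alg ler_pdivrMr ?mulr_gt0 //.
rewrite mulrA mulrAC mulfVK ?gt_eqF // -natrM ler_nat mulnC.
exact: TH_agreeing_bits.
Qed.

Lemma wucost_le n (A : ralg R n) (f : cube n -> bool) (q : nat) (b : R) :
  (nqueries A <= q)%N -> 0 < b -> b <= bias A f ->
  wucost A f <= q%:R + log2 (2 * b)^-1.
Proof.
move=> qA b0 bA; apply: lerD; first by rewrite ler_nat.
have b2_gt0 : 0 < 2 * b by rewrite mulr_gt0.
apply: ler_log2; first by rewrite invr_gt0 mulr_gt0 // (lt_le_trans b0).
by rewrite lef_pV2 ?posrE ?ler_pM2l // mulr_gt0 // (lt_le_trans b0).
Qed.

Lemma wuc_TH_le n : ~~ odd n -> (2 <= n)%N ->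
  wuc_le (@TH n) (3 * log2 (n%:R : R)).
Proof.
move=> ev n2; have b0 : (0 : R) < (2 * n.+1%:R)^-1 by rewrite invr_gt0 mulr_gt0.
have bA := bias_random_bit_alg ev.
exists (random_bit_alg n); split; first exact: valid_random_bit_alg.
split; first exact: lt_le_trans bA.
apply: le_trans (wucost_le (nqueries_random_bit_alg n) b0 bA) _.
rewrite invf_div [2 * _]mulrC mulfK // ?mulr1n.
have := log2_natS_le R (ltnW n2); have := @log2_ge1 R n%:R.
by rewrite ler_nat => /(_ n2); lra.
Qed.

End RandomBit.

Lemma mul_central_binS m :
  (m.+1 * 'C(m.+1.*2, m.+1) = 2 * m.*2.+1 * 'C(m.*2, m))%N.
Proof.
have sym : 'C(m.*2.+1, m.+1) = 'C(m.*2.+1, m).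
  by rewrite -bin_sub; [congr 'C(_, _) | ]; lia.
have := mul_bin_diag m.*2.+1 m; rewrite /= sym.
have -> : m.+1.*2 = m.*2.+2 by lia.
rewrite binS sym; lia.
Qed.

Lemma central_bin_sqr_ge m : (0 < m)%N -> (16 ^ m <= 4 * m * 'C(m.*2, m) ^ 2)%N.
Proof.
elim: m => // m IH _; case: m IH => [|m IH]; first by [].
have {}IH := IH isT.
have := mul_central_binS m.+1.
set a := 'C(m.+1.*2, m.+1); set b := 'C(m.+2.*2, m.+2) => hab.
rewrite -(leq_pmul2l (ltn0Sn m.+1)).
have -> : (m.+2 * (4 * m.+2 * b ^ 2) = 4 * (2 * (m.+1).*2.+1 * a) ^ 2)%N.
  by rewrite -hab; ring.
rewrite expnS; move: IH; set P := (16 ^ m.+1)%N; nia.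
Qed.

Lemma card_hw_eq n k : #|[set x : cube n | hw x == k]| = 'C(n, k).
Proof.
pose g (B : {set 'I_n}) : cube n := [ffun i => i \in B].
have g_inj : injective g.
  by move=> A B /ffunP gAB; apply/setP => i; have := gAB i; rewrite !ffunE.
rewrite -[n in 'C(n, _)]card_ord -card_draws -(card_imset _ g_inj).
apply: eq_card => x; rewrite inE; apply/idP/imsetP => [hx | [B hB ->]].
  by exists [set i | x i]; rewrite ?inE //; apply/ffunP => i; rewrite ffunE inE.
rewrite inE in hB; rewrite /hw -(eqP hB); apply/eqP/eq_card => i.
by rewrite !inE ffunE.
Qed.

Lemma hw_flip0 n (x : cube n) i : x i = false -> hw (flip x i) = (hw x).+1.
Proof.
move=> xi; rewrite /hw.
have -> : [set j | flip x i j] = i |: [set j | x j].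
  apply/setP => j; rewrite !inE /flip ffunE.
  by case: eqP => [->|_]; rewrite ?xi.
by rewrite cardsU1 inE xi.
Qed.

Lemma sens_TH_balanced m (x : cube m.*2) : hw x = m -> (m <= sens (@TH _) x)%N.
Proof.
move=> hx; have zeros : #|[pred i | x i == false]| = m.
  by rewrite card_bits_eq hx; lia.
rewrite -[X in (X <= _)%N]zeros.
apply: subset_leq_card; apply/fintype.subsetP => i.
by rewrite !inE => /eqP xi; rewrite /TH hw_flip0 // hx; lia.
Qed.

Lemma sum_sens_TH_ge m :
  (m * 'C(m.*2, m) <= \sum_(x : cube m.*2) sens (@TH _) x)%N.
Proof.
rewrite (bigID (fun x => hw x == m)) /=; apply: leq_trans (leq_addr _ _).
rewrite -card_hw_eq cardsE mulnC -sum_nat_const.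
by apply: leq_sum => x /eqP; apply: sens_TH_balanced.
Qed.

Lemma sqrt_le_of_sqr_le (R : rcfType) (x y : R) :
  0 <= y -> x <= y ^+ 2 -> Num.sqrt x <= y.
Proof. by move=> y0 xy; rewrite -(ger0_norm y0) -sqrtr_sqr ler_wsqrtr. Qed.

Section AverageSensitivity.
Variable R : realType.

Lemma avg_sens_TH_ge m :
  (m * 'C(m.*2, m))%:R / 2 ^+ m.*2 <= avg_sens R (@TH m.*2).
Proof.
rewrite /avg_sens [X in _ <= X]mulrC -natr_sum.
by rewrite ler_pM2r ?invr_gt0 ?exprn_gt0 // ler_nat sum_sens_TH_ge.
Qed.

Lemma sqrt_le_avg_sens_TH n : ~~ odd n -> (2 <= n)%N ->
  4^-1 * Num.sqrt (n%:R : R) <= avg_sens R (@TH n).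
Proof.
move=> ev n2; have [m em] : exists m, n = m.*2.
  by exists n./2; rewrite even_halfK.
subst n; have m0 : (0 < m)%N by lia.
apply: le_trans (avg_sens_TH_ge m).
rewrite mulrC ler_pdivrMr //; apply: sqrt_le_of_sqr_le.
  by rewrite mulr_ge0 ?divr_ge0 ?exprn_ge0.
rewrite exprMn expr_div_n mulrAC ler_pdivlMr ?exprn_gt0 //.
rewrite -!natrX -!natrM ler_nat.
have pow16 : ((2 ^ m.*2) ^ 2 = 16 ^ m)%N.
  by rewrite -expnM (_ : 16 = 2 ^ 4)%N // -expnM; congr (_ ^ _)%N; lia.
rewrite pow16; have := central_bin_sqr_ge m0.
set C := 'C(_, _); set P := (16 ^ m)%N; nia.
Qed.

End AverageSensitivity.

Theorem lemma11 (R : realType) :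
  (exists (C : R) (N : nat), 0 < C /\
     forall n : nat, ~~ odd n -> (N <= n)%N ->
       wuc_le (@TH n) (C * log2 (n%:R : R)))
  /\
  (exists (c : R) (N : nat), 0 < c /\
     forall n : nat, ~~ odd n -> (N <= n)%N ->
       c * Num.sqrt (n%:R : R) <= avg_sens R (@TH n)).
Proof.
split; first by exists 3, 2%N; split => // n; apply: wuc_TH_le.
by exists 4^-1, 2%N; split => // n; apply: sqrt_le_avg_sens_TH.
Qed.
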